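(* For each $u\in(0,1)$, $\phi(u)=(\mathcal E^c_u)'(G(u)-)=(\mathcal E^c_u)'(S(u)-)$.
   Context: Let $\mu,\nu$ be probability measures on $\mathbb R$ with finite first moments and $\mu\le_{cx}\nu$. Put $P_\eta(k)=\int(k-x)^+\eta(dx)$, $D=P_\nu-P_\mu$, and assume $\{k:D(k)>0\}$ is an interval. Let $G$ be any quantile function of $\mu$. For $u\in(0,1)$ let $\mu_u(A)=\mu(A\cap(-\infty,G(u)))+\big(u-\mu((-\infty,G(u)))\big)\delta_{G(u)}(A)$ and $\mathcal E_u=P_\nu-P_{\mu_u}$. $f^c$ is the largest convex minorant of $f$; $Z^f(y)=\inf\{z\ge y: f^c(z)=f(z)\}$. Define $S(u)=Z^{\mathcal E_u}(G(u))$ and $\phi(u)=\inf\partial\mathcal E_u^c(G(u))$ (subdifferential). $h'(x-)$ denotes the left derivative. *)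

From HB Require Import structures.
From mathcomp Require Import all_boot all_order all_algebra.
From mathcomp Require Import all_classical all_reals all_analysis.
Import Order.TTheory GRing.Theory Num.Theory numFieldNormedType.Exports.

Set Implicit Arguments.
Unset Strict Implicit.
Unset Printing Implicit Defensive.

Local Open Scope classical_set_scope.
Local Open Scope ring_scope.

Section Defs.
Variable R : realType.

Definition finite_first_moment (eta : {measure set R -> \bar R}) : Prop :=
  (\int[eta]_x (`|x|)%:E < +oo)%E.

Definition cx_le (mu nu : {measure set R -> \bar R}) : Prop :=
  forall phi : R -> R, convex_function (E := R^o) setT phi ->
    (\int[mu]_x (phi x)%:E <= \int[nu]_x (phi x)%:E)%E.

Definition Pput (eta : {measure set R -> \bar R}) (k : R) : R :=
  fine (\int[eta]_x (Num.max (k - x) 0)%:E)%E.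

Definition is_quantile (mu : {measure set R -> \bar R}) (G : R -> R) : Prop :=
  forall u : R, 0 < u < 1 ->
    (mu `]-oo, G u[%classic <= u%:E <= mu `]-oo, G u]%classic)%E.

Lemma max0_ge0 (x : R) : 0 <= Num.max x 0.
Proof. by rewrite le_max lexx orbT. Qed.

(* weight of the atom at G u: u - mu((-oo, G u)); it is >= 0 when G is a
   quantile function of mu, the max with 0 only serves to type it as a
   nonnegative number (needed to scale a measure). *)
Definition atom_weight (mu : {measure set R -> \bar R}) (G : R -> R) (u : R)
  : {nonneg R} :=
  NngNum (max0_ge0 (u - fine (mu `]-oo, G u[%classic))).

Definition mu_u (mu : {measure set R -> \bar R}) (G : R -> R) (u : R)
  : {measure set R -> \bar R} :=
  measure_add (mrestr mu (measurable_itv `]-oo, G u[))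
              (mscale (atom_weight mu G u) \d_(G u)).

Definition Eu (mu nu : {measure set R -> \bar R}) (G : R -> R) (u : R)
  : R -> R :=
  fun k => Pput nu k - Pput (mu_u mu G u) k.

Definition conv_minorant (f : R -> R) (x : R) : R :=
  sup [set g x | g in [set g : R -> R |
         convex_function (E := R^o) setT g /\ (forall z, g z <= f z)]].

Definition Zf (f : R -> R) (y : R) : R :=
  inf [set z | y <= z /\ conv_minorant f z = f z].

Definition subdiff (f : R -> R) (x : R) : set R :=
  [set s | forall z, f x + s * (z - x) <= f z].

Definition Sfun (mu nu : {measure set R -> \bar R}) (G : R -> R) (u : R) : R :=
  Zf (Eu mu nu G u) (G u).

Definition phifun (mu nu : {measure set R -> \bar R}) (G : R -> R) (u : R) : R :=
  inf (subdiff (conv_minorant (Eu mu nu G u)) (G u)).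

Definition has_left_deriv (h : R -> R) (x l : R) : Prop :=
  (fun y => (h y - h x) / (y - x)) @ x^'- --> l.

End Defs.

(* The minorant E_u^c is convex, so its left derivative exists everywhere and
   equals the least subgradient; at G(u) this is the first identity.  For the
   second, let S = S(u) and let l be the tangent line of E_u^c at G(u) with
   slope phi(u).  The contact set of E_u^c with l is a closed interval starting
   at G(u); if its right end b were below S, then E_u^c(b) < E_u(b), and by
   continuity of E_u the line l could be tilted upward near b into an affine
   minorant of E_u exceeding E_u^c(b).  So E_u^c = l on [G(u), S], and the left
   derivative at S is phi(u) as well.
   The measures only enter to show that S is a genuine contact point: by
   put-call parity and the convex order, E_u stays above a constant c0 on the
   left of G(u) and equals (1 - u)(k - G(u)) + c0 + int (x - k)^+ dnu on its
   right; the last integral vanishes at infinity, which forces E_u to touch a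
   supporting line somewhere to the right of G(u). *)

From HB Require Import structures.
From mathcomp Require Import all_boot all_order all_algebra.
From mathcomp Require Import all_classical all_reals all_analysis.
From mathcomp Require Import ring lra measurable_realfun.
Import Order.TTheory GRing.Theory Num.Theory numFieldNormedType.Exports.
Local Open Scope classical_set_scope.
Local Open Scope ring_scope.
Set Implicit Arguments.
Unset Strict Implicit.
Unset Printing Implicit Defensive.

(** * Convex functions of a real variable *)

Section convex_real.
Variable R : realType.
Implicit Types (h : R -> R) (x y z : R).

Definition convex_real h := forall x y t, 0 <= t <= 1 ->
  h (t * x + (1 - t) * y) <= t * h x + (1 - t) * h y.

Lemma convex_functionP h : convex_function (E := R^o) setT h <-> convex_real h.
Proof.
split=> [hc x y t /andP[t0 t1]|hc t x y _ _].
  by have := hc (Itv01 t0 t1) x y; rewrite !inE !convRE => /(_ I I).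
by rewrite !convRE; apply: hc; rewrite ge0 le1.
Qed.

Lemma convex_affine (a c : R) : convex_real (fun x => a * x + c).
Proof. by move=> x y t _; rewrite le_eqVlt; apply/orP; left; apply/eqP; ring. Qed.

Lemma convexB_affine h a c : convex_real h -> convex_real (fun x => h x - (a * x + c)).
Proof.
move=> hc x y t t01; have := hc x y t t01.
suff -> : a * (t * x + (1 - t) * y) + c = t * (a * x + c) + (1 - t) * (a * y + c) by lra.
ring.
Qed.

Lemma convex_chord h x y z : convex_real h -> x < y -> y < z ->
  h y * (z - x) <= (z - y) * h x + (y - x) * h z.
Proof.
move=> hc xy yz; have zx : 0 < z - x by lra.
pose t := (z - y) / (z - x).
have t01 : 0 <= t <= 1 by rewrite divr_ge0 ?ler_pdivrMr /=; lra.
have -> : y = t * x + (1 - t) * z by rewrite /t; field; lra.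
have -> : z - (t * x + (1 - t) * z) = t * (z - x) by rewrite /t; field; lra.
have -> : t * x + (1 - t) * z - x = (1 - t) * (z - x) by rewrite /t; field; lra.
have := ler_wpM2r (ltW zx) (hc x z t t01); lra.
Qed.

Definition slope h x y := (h y - h x) / (y - x).

Lemma slopeC h x y : slope h x y = slope h y x.
Proof. by rewrite /slope -mulrNN -invrN !opprB. Qed.

Lemma slopeM h x y : x != y -> slope h x y * (y - x) = h y - h x.
Proof. by move=> xy; rewrite /slope mulfVK // subr_eq0 eq_sym. Qed.

Definition left_deriv h x := sup [set slope h x y | y in [set y | y < x]].

Section slopes.
Variable h : R -> R.
Hypothesis hc : convex_real h.

Lemma slope_mono_r x y z : x < y -> y <= z -> slope h x y <= slope h x z.
Proof.
move=> xy; rewrite le_eqVlt => /predU1P[<- //|yz].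
rewrite /slope ler_pdivrMr; last lra.
rewrite mulrAC ler_pdivlMr; last lra.
have := convex_chord hc xy yz; lra.
Qed.

Lemma slope_mono_l x y z : x <= y -> y < z -> slope h x z <= slope h y z.
Proof.
rewrite le_eqVlt => /predU1P[-> //|xy] yz.
rewrite /slope ler_pdivrMr; last lra.
rewrite mulrAC ler_pdivlMr; last lra.
have := convex_chord hc xy yz; lra.
Qed.

Lemma slope_left_le_right y x z : y < x -> x < z -> slope h x y <= slope h x z.
Proof.
move=> yx xz; rewrite slopeC; apply: (le_trans (slope_mono_r yx (ltW xz))).
exact: slope_mono_l (ltW yx) xz.
Qed.

Lemma convex_ge0_sup_zero (B : set R) : (forall x, 0 <= h x) ->
  (forall x, B x -> h x = 0) -> has_sup B -> h (sup B) = 0.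
Proof.
move=> h0 hB supB; set b := sup B.
apply/eqP; rewrite eq_le h0 andbT leNgt; apply/negP => hb.
pose e := h b / (h (b + 1) + 1).
have e0 : 0 < e by rewrite divr_gt0 //; have := h0 (b + 1); lra.
have eK : e * (h (b + 1) + 1) = h b.
  by rewrite mulfVK //; have := h0 (b + 1); lra.
have [w Bw bw] := sup_adherent e0 supB.
have [wb|bw'] := ltP w b; last first.
  have wb := sup_upper_bound supB Bw.
  by move: hb; rewrite (@le_anti _ _ b w) ?bw' ?wb // hB // ltxx.
have bb1 : b < b + 1 by lra.
have := convex_chord hc wb bb1; rewrite (hB w Bw) mulr0 add0r.
rewrite -/b in bw; have := h0 (b + 1); nra.
Qed.

Section left_deriv.
Variable x : R.
Let slopes := [set slope h x y | y in [set y | y < x]].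

Let has_sup_slopes : has_sup slopes.
Proof.
split; first by exists (slope h x (x - 1)), (x - 1) => //=; lra.
exists (slope h x (x + 1)) => _ [y /= yx <-].
by apply: slope_left_le_right => //; lra.
Qed.

Lemma slope_le_left_deriv y : y < x -> slope h x y <= left_deriv h x.
Proof. by move=> yx; apply: sup_upper_bound has_sup_slopes _ _; exists y. Qed.

Lemma left_deriv_subgradient : subdiff h x (left_deriv h x).
Proof.
move=> z; have [zx|xz|->] := ltgtP z x; last by rewrite subrr mulr0 addr0.
- have := slopeM h (negbT (gt_eqF zx)); have := slope_le_left_deriv zx; nra.
- have := slopeM h (negbT (lt_eqF xz)).
  suff : left_deriv h x <= slope h x z by nra.
  apply: ge_sup; first by case: has_sup_slopes.
  by move=> _ [y /= yx <-]; exact: slope_left_le_right.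
Qed.

Lemma left_deriv_le_subgradient s : subdiff h x s -> left_deriv h x <= s.
Proof.
move=> hs; apply: ge_sup; first by case: has_sup_slopes.
move=> _ [y /= yx <-]; rewrite /slope ler_ndivrMr; last lra.
by have := hs y; lra.
Qed.

Lemma inf_subdiff_left_deriv : inf (subdiff h x) = left_deriv h x.
Proof.
apply/le_anti/andP; split.
  apply: ge_inf; last exact: left_deriv_subgradient.
  by exists (left_deriv h x) => s /left_deriv_le_subgradient.
apply: lb_le_inf; first by exists (left_deriv h x); exact: left_deriv_subgradient.
by move=> s /left_deriv_le_subgradient.
Qed.

Lemma has_left_deriv_convex : has_left_deriv h x (left_deriv h x).
Proof.
apply/cvgrPdist_le => e e0.
have [_ [y0 /= y0x <-] hy0] := sup_adherent e0 has_sup_slopes.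
near=> y.
have yx : y < x by near: y; exact: nbhs_left_lt.
have y0y : y0 < y by near: y; exact: nbhs_left_gt.
have := slope_le_left_deriv yx; have := slope_mono_l (ltW y0y) yx.
rewrite -slopeC -(slopeC h x y) => h1 h2.
rewrite ger0_norm ?subr_ge0 //; rewrite /left_deriv -/slopes in h2 hy0 *.
by rewrite /slope in h1 h2 hy0 *; lra.
Unshelve. all: by end_near.
Qed.

End left_deriv.
End slopes.
End convex_real.

(** * Continuous functions of a real variable *)

Section continuous_real.
Variable R : realType.
Implicit Types (g : R -> R).

Lemma continuous_gt_near g b z : {for b, continuous g} -> z < g b ->
  exists2 r : R, 0 < r & forall v, `|v - b| < r -> z < g v.
Proof.
move=> gc hz; have : \forall v \near b, z < g v by exact: cvgr_gt gc _ hz.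
by move=> /nbhs_normP[r /= r0 hr]; exists r => // v vb; apply: hr; rewrite /= distrC.
Qed.

Lemma continuous_subr_affine g (a c : R) :
  continuous g -> continuous (fun x => g x - (a * x + c)).
Proof.
move=> gc x; apply: cvgB; first exact: gc.
by apply: cvgD; [apply: cvgM; [exact: cvg_cst | exact: cvg_id] | exact: cvg_cst].
Qed.

Lemma lipschitz_continuous g (c : R) :
  (forall k k', `|g k - g k'| <= c * `|k - k'|) -> continuous g.
Proof.
move=> lip x; apply/cvgrPdist_lt => e e0.
have c0 : 0 <= c by have := lip 0 1; rewrite sub0r normrN normr1 mulr1; exact: le_trans.
apply/nbhs_normP; exists (e / (c + 1)) => /=; first by rewrite divr_gt0 //; lra.
move=> y /= hy; apply: le_lt_trans (lip x y) _.
rewrite ltr_pdivlMr in hy; last lra.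
have := normr_ge0 (x - y); nra.
Qed.

Lemma continuous_global_min g (a c x0 : R) :
  continuous g -> a <= x0 <= c -> (forall k, k < a \/ c < k -> g x0 <= g k) ->
  exists2 z, a <= z <= c & forall k, g z <= g k.
Proof.
move=> gc /andP[ax0 x0c] out.
have [z] := EVT_min (le_trans ax0 x0c) (continuous_subspaceT gc).
rewrite in_itv /= => /andP[az zc] zmin; exists z; first by rewrite az zc.
have x0ac : x0 \in `[a, c] by rewrite in_itv /= ax0 x0c.
move=> k; have [ka|ak] := ltP k a.
  exact: le_trans (zmin _ x0ac) (out k (or_introl ka)).
have [kc|ck] := leP k c; first by apply: zmin; rewrite in_itv /= ak kc.
exact: le_trans (zmin _ x0ac) (out k (or_intror ck)).
Qed.

Lemma continuous_lbound_left g (G a : R) :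
  continuous g -> 0 < a -> 0 < g G ->
  (forall k, k <= G -> a * (G - k) <= g k) ->
  exists2 m, 0 < m & forall k, k <= G -> m <= g k.
Proof.
move=> gc a0 gG gl; have gG2 : g G / 2 < g G by lra.
have [r r0 hr] := continuous_gt_near (gc G) gG2.
exists (Num.min (g G / 2) (a * r)) => [|k kG].
  by rewrite lt_min (mulr_gt0 a0 r0) andbT; lra.
have [kr|rk] := ltP (G - k) r.
  by rewrite ge_min ltW // hr // distrC ger0_norm //; lra.
by rewrite ge_min orbC (le_trans _ (gl k kG)) // ler_wpM2l //; lra.
Qed.

(* Minimise g k + e * (k - G) for a small e > 0: the tilt makes the minimum
   attained, and at some z >= G because g is bounded away from 0 on the left. *)
Lemma supporting_line_right g (G a : R) :
  continuous g -> 0 < a ->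
  (forall k, k <= G -> a * (G - k) <= g k) ->
  (forall k, G <= k -> 0 <= g k) ->
  (forall eta, 0 < eta -> exists2 K, G <= K & g K < eta) ->
  exists2 z, G <= z & exists s, forall k, g z + s * (k - z) <= g k.
Proof.
move=> gc a0 gl gr ginf.
have g0 k : 0 <= g k.
  have [kG|Gk] := leP k G; last by apply: gr; lra.
  by apply: le_trans (gl k kG); rewrite mulr_ge0 //; lra.
have [gG0|gGp] := eqVneq (g G) 0.
  by exists G => //; exists 0 => k; rewrite mul0r addr0 gG0.
have gG : 0 < g G by rewrite lt_neqAle eq_sym gGp g0.
have [m m0 gm] := continuous_lbound_left gc a0 gG gl.
have [K GK gK] := ginf (m / 4) (divr_gt0 m0 (ltr0n _ 4)).
pose e := Num.min (a / 2) (m / (4 * (K - G + 1))).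
have e0 : 0 < e by rewrite lt_min !divr_gt0 //; lra.
have ea : e <= a / 2 by rewrite ge_min lexx.
have eK : e * (K - G) <= m / 4.
  have : e <= m / (4 * (K - G + 1)) by rewrite /e ge_min lexx orbT.
  by rewrite ler_pdivlMr; nra.
pose F k := g k - (- e * k + e * G).
have FK : F K < m / 2 by rewrite /F; lra.
have [z /andP[Gz _] zmin] : exists2 z, G <= z <= K + m / e & forall k, F z <= F k.
  apply: (@continuous_global_min F G (K + m / e) K).
  - exact: continuous_subr_affine.
  - by rewrite GK /= lerDl divr_ge0 // ltW.
  - move=> k [kG|Kk]; apply/ltW/(lt_le_trans FK); rewrite /F.
      have := gm k (ltW kG); have := gl k (ltW kG).
      have : e * (G - k) <= a / 2 * (G - k) by rewrite ler_wpM2r //; lra.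
      lra.
    have : m <= e * (k - G).
      have -> : m = e * (m / e) by rewrite mulrC divfK // gt_eqF.
      by rewrite ler_wpM2l //; lra.
    have := g0 k; lra.
by exists z => //; exists (- e) => k; have := zmin k; rewrite /F; lra.
Qed.

End continuous_real.

(** * The largest convex minorant *)

Lemma tilted_line_le (R : realType) (f l : R -> R) (b e t c : R) :
  0 < e -> 0 <= t -> 2 * t <= c ->
  (forall v, l v <= f v) ->
  (forall v, `|v - b| <= e -> l v + 2 * t * e <= f v) ->
  (forall v, b + e <= v -> l v + c * (v - b) <= f v) ->
  forall v, l v + t * (v - b + e) <= f v.
Proof.
move=> e0 t0 tc lf near far v.
have [vl|lv] := ltP v (b - e).
  by apply: le_trans (lf v); rewrite gerDl; nra.
have [vr|rv] := ltP v (b + e).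
  apply: le_trans (near v _); last by rewrite ler_norml; lra.
  by rewrite lerD2l; nra.
apply: le_trans (far v rv); rewrite lerD2l.
have vb : 0 <= v - b by lra.
by apply: le_trans (ler_wpM2r vb tc); nra.
Qed.

Section conv_minorant.
Variable R : realType.
Variable f : R -> R.
Hypothesis f_minorized : exists2 g : R -> R, convex_real g & forall z, g z <= f z.
Local Notation fc := (conv_minorant f).

Lemma conv_minorant_le x : fc x <= f x.
Proof.
apply: ge_sup; last by move=> _ [g [_ gf] <-].
have [g gc gf] := f_minorized.
by exists (g x), g => //; split => //; exact/convex_functionP.
Qed.

Lemma conv_minorant_ge g x : convex_real g -> (forall z, g z <= f z) -> g x <= fc x.
Proof.
move=> gc gf; apply: ub_le_sup; first by exists (f x) => _ [g' [_ g'f] <-].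
by exists g => //; split => //; exact/convex_functionP.
Qed.

Lemma conv_minorant_ge_affine a c x :
  (forall z, a * z + c <= f z) -> a * x + c <= fc x.
Proof. by apply: conv_minorant_ge; exact: convex_affine. Qed.

Lemma convex_conv_minorant : convex_real fc.
Proof.
move=> x y t t01; apply: ge_sup.
  have [g gc gf] := f_minorized.
  by exists (g (t * x + (1 - t) * y)), g => //; split => //; exact/convex_functionP.
move=> _ [g [/convex_functionP gc gf] <-].
apply: le_trans (gc x y t t01) _; move: t01 => /andP[t0 t1].
by apply: lerD; apply: ler_wpM2l; rewrite ?subr_ge0 //; exact: conv_minorant_ge.
Qed.

Lemma conv_minorant_contact z s :
  (forall k, f z + s * (k - z) <= f k) -> fc z = f z.
Proof.
move=> hs; apply/le_anti; rewrite conv_minorant_le /=.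
have := @conv_minorant_ge_affine s (f z - s * z) z.
by rewrite addrCA subrr addr0; apply=> k; have := hs k; lra.
Qed.

Hypothesis f_cont : continuous f.

(* If fc rose strictly above its tangent l right after b, then l tilted upward
   by t * (v - b + e) would still lie below f (near b because f > l there,
   far from b because fc - l grows linearly), contradicting maximality of fc. *)
Lemma conv_minorant_tangent_right b s : subdiff fc b s -> fc b < f b ->
  exists2 d, 0 < d & forall w, b <= w <= b + d -> fc w = fc b + s * (w - b).
Proof.
move=> sb fb; pose l w := s * w + (fc b - s * b); pose D := f b - fc b.
have lE w : l w = fc b + s * (w - b) by rewrite /l; ring.
have lfc w : l w <= fc w by rewrite lE; exact: sb.
have lf v : l v <= f v := le_trans (lfc v) (conv_minorant_le v).
have hD : D / 2 < f b - (s * b + (fc b - s * b)) by rewrite /D; lra.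
have fl_cont : continuous (fun v => f v - (s * v + (fc b - s * b))).
  exact: continuous_subr_affine.
have [r r0 near] := continuous_gt_near (fl_cont b) hD.
exists (r / 2) => [|w /andP[bw wbr]]; first exact: divr_gt0.
rewrite -lE; have [->|wb] := eqVneq w b; first by rewrite lE subrr mulr0 addr0.
have {}bw : b < w by rewrite lt_neqAle eq_sym wb.
apply/le_anti; rewrite lfc andbT leNgt; apply/negP => lw.
pose e := w - b; pose c := slope fc b w - s; pose t := Num.min (c / 2) (D / (4 * e)).
have e0 : 0 < e by rewrite subr_gt0.
have slope_w := slopeM fc (negbT (lt_eqF bw)).
have c0 : 0 < c by rewrite subr_gt0 -(ltr_pM2r e0) /e; rewrite /l in lw; lra.
have t0 : 0 < t by rewrite lt_min !divr_gt0 ?mulr_gt0 // subr_gt0.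
have tc : 2 * t <= c.
  have : t <= c / 2 by rewrite /t ge_min lexx.
  lra.
have tD : 2 * t * e <= D / 2.
  have : t <= D / (4 * e) by rewrite /t ge_min lexx orbT.
  by rewrite ler_pdivlMr ?mulr_gt0 //; lra.
have far v : b + e <= v -> l v + c * (v - b) <= f v.
  move=> ev; apply: le_trans (conv_minorant_le v); rewrite /e in ev.
  have := slope_mono_r convex_conv_minorant bw (_ : w <= v).
  have := slopeM fc (_ : b != v); rewrite lE /c.
  move=> /(_ ltac:(rewrite lt_eqF //; lra)) slope_v /(_ ltac:(lra)) le_slope.
  have vb : 0 <= v - b by lra.
  have := ler_wpM2r vb le_slope; lra.
have nearer v : `|v - b| <= e -> l v + 2 * t * e <= f v.
  move=> vb; have er : e <= r / 2 by rewrite /e; lra.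
  have /near : `|v - b| < r by lra.
  rewrite /l; lra.
have tilt := tilted_line_le e0 (ltW t0) tc lf nearer far.
have := @conv_minorant_ge_affine (s + t) (fc b - s * b + t * (e - b)) b.
have -> : (s + t) * b + (fc b - s * b + t * (e - b)) = fc b + t * e by ring.
suff /[swap]/[apply] : forall z, (s + t) * z + (fc b - s * b + t * (e - b)) <= f z.
  by have := mulr_gt0 t0 e0; lra.
by move=> z; have := tilt z; rewrite /l; lra.
Qed.

Section contact.
Variable y0 : R.
Hypothesis contact_right : [set w | y0 <= w /\ fc w = f w] !=set0.

Lemma conv_minorant_affine_to_contact s z : subdiff fc y0 s ->
  y0 <= z -> z <= Zf f y0 -> fc z = fc y0 + s * (z - y0).
Proof.
move=> sy0 y0z zS; pose l w := s * w + (fc y0 - s * y0).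
suff : fc z = l z by rewrite /l => ->; ring.
have lfc w : l w <= fc w by have := sy0 w; rewrite /l; lra.
pose B := [set w | y0 <= w <= z /\ fc w = l w].
have By0 : B y0 by split; [rewrite lexx y0z | rewrite /l; ring].
have supB : has_sup B by split; [exists y0 | exists z => w [/andP[]]].
pose b := sup B.
have y0b : y0 <= b := sup_upper_bound supB By0.
have bz : b <= z by apply: ge_sup; [exists y0 | move=> w [/andP[]]].
have hb : fc b = l b.
  apply/eqP; rewrite -subr_eq0; apply/eqP.
  apply: (convex_ge0_sup_zero (convexB_affine _ _ convex_conv_minorant)) => //.
  - by move=> w /=; rewrite subr_ge0 lfc.
  - by move=> w [_ /= ->]; rewrite subrr.
have [bz'|zb] := ltP b z; last by have -> : z = b by apply/le_anti; rewrite zb bz.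
have fb : fc b < f b.
  rewrite lt_neqAle conv_minorant_le andbT; apply/eqP => fbe.
  have : Zf f y0 <= b by apply: ge_inf; [exists y0 => w [] | split].
  lra.
have sb : subdiff fc b s by move=> w; have := lfc w; rewrite hb /l; lra.
have [d d0 hd] := conv_minorant_tangent_right sb fb.
pose w := Num.min (b + d) z.
have bw : b < w by rewrite lt_min bz' andbT; lra.
have wd : w <= b + d by rewrite ge_min lexx.
have wz : w <= z by rewrite ge_min lexx orbT.
have Bw : B w.
  split; first by rewrite wz andbT; lra.
  by rewrite hd ?(ltW bw) ?wd // hb /l; ring.
by have := sup_upper_bound supB Bw; rewrite -/b; lra.
Qed.

Theorem conv_minorant_left_deriv_contact :
  has_left_deriv fc y0 (inf (subdiff fc y0)) /\
  has_left_deriv fc (Zf f y0) (inf (subdiff fc y0)).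
Proof.
rewrite (inf_subdiff_left_deriv convex_conv_minorant).
split; first exact: (has_left_deriv_convex convex_conv_minorant (x := y0)).
have y0S : y0 <= Zf f y0 by apply: lb_le_inf => // w [].
have [y0S'|] := ltP y0 (Zf f y0); last first.
  move=> Sy0; have -> : Zf f y0 = y0 by apply/le_anti; rewrite Sy0 y0S.
  exact: (has_left_deriv_convex convex_conv_minorant (x := y0)).
have affine :=
  conv_minorant_affine_to_contact (left_deriv_subgradient convex_conv_minorant y0).
apply: cvg_near_cst; near=> y.
have yS : y < Zf f y0 by near: y; exact: nbhs_left_lt.
have y0y : y0 < y by near: y; exact: nbhs_left_gt.
rewrite (affine y) ?(ltW y0y) ?(ltW yS) // (affine (Zf f y0)) ?lexx //.
set L := left_deriv _ _.
have -> : fc y0 + L * (y - y0) - (fc y0 + L * (Zf f y0 - y0)) = L * (y - Zf f y0).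
  by ring.
by rewrite mulfK // subr_eq0 lt_eqF.
Unshelve. all: by end_near.
Qed.

End contact.
End conv_minorant.
(** * Put and call payoffs *)

Section payoffs.
Variable R : realType.
Implicit Types k x : R.

Definition put_payoff k x := Num.max (k - x) 0.
Definition call_payoff k x := Num.max (x - k) 0.

Lemma put_payoff_ge0 k x : 0 <= put_payoff k x.
Proof. by rewrite le_max lexx orbT. Qed.

Lemma call_payoff_ge0 k x : 0 <= call_payoff k x.
Proof. by rewrite le_max lexx orbT. Qed.

Lemma put_call_payoff k x : put_payoff k x = (k - x) + call_payoff k x.
Proof.
by rewrite /put_payoff /call_payoff; case: (leP (k - x) 0) => h;
  [rewrite max_l|rewrite max_r]; lra.
Qed.

Lemma put_payoff_le k x : put_payoff k x <= `|k| + `|x|.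
Proof.
rewrite ge_max addr_ge0 // andbT.
by have := ler_norm k; have := ler_norm (- x); rewrite normrN; lra.
Qed.

Lemma call_payoff_le k x : call_payoff k x <= `|k| + `|x|.
Proof.
rewrite ge_max addr_ge0 // andbT.
by have := ler_norm x; have := ler_norm (- k); rewrite normrN; lra.
Qed.

Lemma put_payoff_lipschitz k k' x : `|put_payoff k x - put_payoff k' x| <= `|k - k'|.
Proof.
rewrite /put_payoff ler_norml.
have := ler_norm (k - k'); have := ler_norm (- (k - k')); rewrite normrN.
by case: (leP (k - x) 0); case: (leP (k' - x) 0) => h1 h2 a1 a2;
  rewrite ?(max_r (ltW _)) ?max_l ?max_r //; lra.
Qed.

Lemma convex_call_payoff k : convex_real (call_payoff k).
Proof.
move=> x y t /andP[t0 t1]; rewrite ge_max; apply/andP; split.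
  have hx : x - k <= call_payoff k x by rewrite le_max lexx.
  have hy : y - k <= call_payoff k y by rewrite le_max lexx.
  have := ler_wpM2l t0 hx; have := ler_wpM2l (_ : 0 <= 1 - t) hy.
  by move=> /(_ ltac:(lra)); nra.
by rewrite addr_ge0 // mulr_ge0 ?call_payoff_ge0 //; lra.
Qed.

Lemma PputE (eta : {measure set R -> \bar R}) k :
  Pput eta k = \int[eta]_x put_payoff k x.
Proof. by []. Qed.

Lemma measurable_put_payoff (D : set R) k : measurable_fun D (put_payoff k).
Proof.
apply: (measurable_maxr (f := fun x => k - x) (g := cst 0)) => //.
exact: measurable_funB.
Qed.

Lemma measurable_call_payoff (D : set R) k : measurable_fun D (call_payoff k).
Proof.
apply: (measurable_maxr (f := fun x => x - k) (g := cst 0)) => //.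
exact: measurable_funB.
Qed.

End payoffs.

Section first_moment.
Variable R : realType.
Variable P : probability R R.
Hypothesis P_moment : finite_first_moment P.
Implicit Types (D : set R) (k : R).

Lemma integrable_id D : measurable D -> P.-integrable D (EFin \o id).
Proof.
move=> mD; apply: (integrableS measurableT) => //.
by apply/integrableP; split; [exact/measurable_EFinP/measurable_id | exact: P_moment].
Qed.

Lemma integrable_linear_growth D (h : R -> R) (c : R) : measurable D ->
  measurable_fun D h -> (forall x, `|h x| <= `|c| + `|x|) ->
  P.-integrable D (EFin \o h).
Proof.
move=> mD mh hc.
have hi : P.-integrable D (fun x => (`|c| + `|x|)%:E).
  have hD : P.-integrable D ((EFin \o cst `|c|) \+ (EFin \o (fun x : R => `|x|))).
    apply: integrableD => //; first exact: finite_measure_integrable_cst.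
    exact: integrable_norm (integrable_id mD).
  by apply: eq_integrable hD.
apply: le_integrable hi => //; first exact/measurable_EFinP.
by move=> x _ /=; rewrite lee_fin (ger0_norm (addr_ge0 (normr_ge0 c) (normr_ge0 x))).
Qed.

Lemma integrable_put_payoff D k : measurable D -> P.-integrable D (EFin \o put_payoff k).
Proof.
move=> mD; apply: (integrable_linear_growth (c := k)) => //.
  exact: measurable_put_payoff.
by move=> x; rewrite ger0_norm ?put_payoff_ge0 ?put_payoff_le.
Qed.

Lemma integrable_call_payoff D k : measurable D -> P.-integrable D (EFin \o call_payoff k).
Proof.
move=> mD; apply: (integrable_linear_growth (c := k)) => //.
  exact: measurable_call_payoff.
by move=> x; rewrite ger0_norm ?call_payoff_ge0 ?call_payoff_le.
Qed.

Lemma put_call_parity D k : measurable D ->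
  \int[P]_(x in D) put_payoff k x =
  k * fine (P D) - \int[P]_(x in D) x + \int[P]_(x in D) call_payoff k x.
Proof.
move=> mD; rewrite (eq_Rintegral _ (g := fun x : R => (k - x) + call_payoff k x)) => [|x _];
  last exact: put_call_payoff.
rewrite RintegralD //; last exact: integrable_call_payoff.
  rewrite RintegralB ?Rintegral_cst //; last exact: integrable_id.
  exact: finite_measure_integrable_cst.
apply: (integrable_linear_growth (c := k)) => //; first exact: measurable_funB.
by move=> x; apply: (le_trans (ler_normB _ _)); rewrite lexx.
Qed.

Lemma Rintegral_put_payoff_lipschitz D k k' : measurable D ->
  `|\int[P]_(x in D) put_payoff k x - \int[P]_(x in D) put_payoff k' x| <= `|k - k'|.
Proof.
move=> mD; rewrite -RintegralB ?integrable_put_payoff //.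
have lip x : `|put_payoff k x - put_payoff k' x| <= `|k - k'| + `|x|.
  by apply: le_trans (put_payoff_lipschitz k k' x) _; rewrite lerDl.
have mB : measurable_fun D (fun x => put_payoff k x - put_payoff k' x).
  by apply: measurable_funB; exact: measurable_put_payoff.
apply: le_trans (le_normr_Rintegral mD (integrable_linear_growth mD mB lip)) _.
apply: le_trans (le_Rintegral (f2 := cst `|k - k'|) mD _ _ _) _.
- apply: (integrable_linear_growth (c := k - k')) => //.
    exact: measurableT_comp.
  by move=> x; rewrite normr_id.
- exact: finite_measure_integrable_cst.
- by move=> x _; exact: put_payoff_lipschitz.
rewrite Rintegral_cst // ler_piMr //.
rewrite -lee_fin fineK ?probability_le1 // ge0_fin_numE ?measure_ge0 //.
by rewrite (le_lt_trans (probability_le1 P mD)) ?ltry.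
Qed.

Lemma Rintegral_setC D (h : R -> R) : measurable D ->
  P.-integrable setT (EFin \o h) ->
  \int[P]_x h x = \int[P]_(x in D) h x + \int[P]_(x in ~` D) h x.
Proof.
move=> mD hi; rewrite -Rintegral_setU ?setUv //; first exact: measurableC.
by apply/disj_set2P; rewrite setICr.
Qed.

Lemma Pput_parity k :
  Pput P k = k - \int[P]_x x + \int[P]_x call_payoff k x.
Proof. by rewrite PputE put_call_parity // probability_setT mulr1. Qed.

Lemma mean_ge_lower_part a :
  \int[P]_(x in `]-oo, a[) x + a * (1 - fine (P `]-oo, a[%classic)) <= \int[P]_x x.
Proof.
have mD : measurable `]-oo, a[%classic by exact: measurable_itv.
rewrite (Rintegral_setC mD (integrable_id measurableT)) lerD2l.
have -> : 1 - fine (P `]-oo, a[%classic) = \int[P]_(x in ~` `]-oo, a[) 1.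
  have := Rintegral_setC (h := fun=> 1) mD (finite_measure_integrable_cst _ _ measurableT).
  rewrite !Rintegral_cst ?mul1r //; last exact: measurableC.
  have : fine (P setT) = 1 by rewrite probability_setT.
  lra.
rewrite -RintegralZl ?mulr1; last 2 first.
- exact: measurableC.
- exact: finite_measure_integrable_cst (measurableC mD).
apply: le_Rintegral; [exact: measurableC | | exact: integrable_id (measurableC mD) |].
- exact: finite_measure_integrable_cst (measurableC mD).
- by move=> x; rewrite /= in_itv /= => /negP; rewrite -leNgt.
Qed.

Lemma Rintegral_put_payoff_le_Pput D k : measurable D ->
  \int[P]_(x in D) put_payoff k x <= Pput P k.
Proof.
move=> mD; rewrite PputE (Rintegral_setC mD (integrable_put_payoff _ measurableT)) lerDl.
by apply: Rintegral_ge0 => x _; exact: put_payoff_ge0.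
Qed.

Lemma call_integral_vanishing G0 eta : 0 < eta ->
  exists2 K, G0 <= K & \int[P]_x call_payoff K x < eta.
Proof.
move=> eta0.
have : (fun n => \int[P]_x (call_payoff n%:R x)%:E)%E @ \oo --> (\int[P]_x (cst 0 x)%:E)%E.
  apply: (@dominated_cvg _ _ _ P setT measurableT _ (cst 0%E) (fun x => (`|x|)%:E)).
  - by move=> n; apply/measurable_EFinP; exact: measurable_call_payoff.
  - move=> x _; apply: cvg_near_cst; near=> n.
    have : x <= n%:R by near: n; exact: nbhs_infty_ger.
    by move=> xn; rewrite /call_payoff max_r //; lra.
  - by [].
  - have mn : measurable_fun setT (fun x : R => `|x|) := @normr_measurable R setT.
    apply: (integrable_linear_growth (c := 0) measurableT mn).
    by move=> x; rewrite normr0 add0r normr_id.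
  - move=> n x _; rewrite lee_fin ger0_norm ?call_payoff_ge0 //.
    rewrite ge_max normr_ge0 andbT; have := ler_norm x; have : (0 : R) <= n%:R by [].
    lra.
rewrite integral0 => /fine_cvgP[_ /cvgrPdist_lt /(_ eta eta0)] small.
have [N _ hN] : \forall n \near \oo,
    `|0 - \int[P]_x call_payoff n%:R x| < eta /\ G0 <= n%:R.
  by near=> n; split; near: n; [exact: small | exact: nbhs_infty_ger].
have [h1 h2] := hN N (leqnn N).
by exists N%:R => //; move: h1; rewrite sub0r normrN => /(le_lt_trans (ler_norm _)).
Unshelve. all: by end_near.
Qed.

End first_moment.

Lemma integral_mrestr (R : realType)
    (mu : {measure set R -> \bar R}) (D : set R) (mD : measurable D) (h : R -> \bar R) :
  measurable_fun setT h -> (forall x, 0 <= h x)%E ->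
  (\int[mrestr mu mD]_x h x = \int[mu]_(x in D) h x)%E.
Proof.
move=> mh h0; have mCD := measurableC mD.
rewrite -(setUv D) ge0_integral_setU ?setUv //; last by apply/disj_set2P; rewrite setICr.
rewrite (@eq_measure_integral _ _ _ _ mu); last first.
  by move=> A mA AD; rewrite /= /mrestr setIidl.
rewrite [X in (_ + X)%E](@eq_measure_integral _ _ _ _ mzero); last first.
  move=> A mA AD; rewrite /= /mrestr (_ : A `&` D = set0) ?measure0 //.
  by apply/seteqP; split => [x [/AD]|x []//].
by rewrite integral_measure_zero adde0.
Qed.

Lemma Pput_mu_u (R : realType) (mu : probability R R) (G : R -> R) (u k : R) :
  finite_first_moment mu ->
  Pput (mu_u mu G u) k = \int[mu]_(x in `]-oo, G u[) put_payoff k x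
                         + (atom_weight mu G u)%:num * put_payoff k (G u).
Proof.
move=> mu_moment; have mpp : measurable_fun setT (put_payoff k) := measurable_put_payoff k.
have mpp' : measurable_fun setT (EFin \o put_payoff k) by exact/measurable_EFinP.
have pp0 x : setT x -> (0 <= (put_payoff k x)%:E)%E by rewrite lee_fin put_payoff_ge0.
rewrite /Pput /mu_u ge0_integral_measure_add //.
rewrite [X in fine (X + _)](_ : _ = \int[mu]_(x in `]-oo, G u[) (put_payoff k x)%:E)%E;
  last by apply: integral_mrestr => // x; exact: pp0.
rewrite ge0_integral_mscale // integral_dirac // diracE mem_set // mul1e -EFinM fineD //.
exact: integrable_fin_num (integrable_put_payoff mu_moment _ (measurable_itv _)).
Qed.

Lemma cx_le_call (R : realType) (mu nu : probability R R) k :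
  finite_first_moment mu -> finite_first_moment nu -> cx_le mu nu ->
  \int[mu]_x call_payoff k x <= \int[nu]_x call_payoff k x.
Proof.
move=> mu_moment nu_moment cx; apply: fine_le.
- exact: integrable_fin_num (integrable_call_payoff mu_moment _ measurableT).
- exact: integrable_fin_num (integrable_call_payoff nu_moment _ measurableT).
- exact/cx/convex_functionP/convex_call_payoff.
Qed.

(** * The function E_u *)

Section Eu.
Variable R : realType.
Variables (mu nu : probability R R) (G : R -> R) (u : R).
Hypothesis mu_moment : finite_first_moment mu.
Hypothesis nu_moment : finite_first_moment nu.
Hypothesis mu_cx_nu : cx_le mu nu.
Hypothesis G_quantile : is_quantile mu G.
Hypothesis u01 : 0 < u < 1.

Local Notation E := (Eu mu nu G u).
Let D := `]-oo, G u[%classic.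
Let mD : measurable D := measurable_itv _.
Let p := fine (mu D).

Let p_le_u : 0 <= p <= u.
Proof.
have /andP[muD _] := G_quantile u01.
have muD0 : (0 <= mu D)%E := measure_ge0 _ _.
rewrite fine_ge0 //= -lee_fin fineK // ge0_fin_numE // (le_lt_trans muD) ?ltry //.
Qed.

Let EuE k : E k = Pput nu k -
  (\int[mu]_(x in D) put_payoff k x + (u - p) * put_payoff k (G u)).
Proof. by rewrite /Eu Pput_mu_u //= max_l // subr_ge0; case/andP: p_le_u. Qed.

Lemma Eu_continuous : continuous E.
Proof.
apply: (@lipschitz_continuous _ _ 3) => k k'; rewrite !EuE !PputE.
have := Rintegral_put_payoff_lipschitz nu_moment k k' measurableT.
have := Rintegral_put_payoff_lipschitz mu_moment k k' mD.
have := put_payoff_lipschitz k k' (G u); have := normr_ge0 (k - k').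
move: p_le_u u01; rewrite !ler_norml => /andP[p0 pu] /andP[u0 u1] d0.
move=> /andP[a1 a2] /andP[b1 b2] /andP[c1 c2]; apply/andP; split; nra.
Qed.

Lemma Eu_asymptote : exists c0,
  (forall k, k <= G u -> c0 <= E k) /\
  (forall K, G u <= K -> E K = (1 - u) * (K - G u) + c0 + \int[nu]_x call_payoff K x).
Proof.
exists ((1 - p) * G u + \int[mu]_(x in D) x - \int[nu]_x x); split => [k kG|K GK].
  rewrite EuE {2}/put_payoff max_r ?mulr0 ?addr0; last lra.
  have := Rintegral_put_payoff_le_Pput mu_moment k mD.
  rewrite !Pput_parity //.
  have := cx_le_call k mu_moment nu_moment mu_cx_nu.
  have := mean_ge_lower_part mu_moment (G u); rewrite -/D -/p.
  lra.
have callD : \int[mu]_(x in D) call_payoff K x = 0.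
  rewrite (eq_Rintegral _ (g := fun=> 0)) ?Rintegral_cst ?mul0r // => x.
  by rewrite inE /D /= in_itv /= => xG; rewrite /call_payoff max_r //; lra.
rewrite EuE Pput_parity // put_call_parity // callD -/p /put_payoff max_l; last lra.
ring.
Qed.

Lemma Eu_minorized : exists2 g : R -> R, convex_real g & forall z, g z <= E z.
Proof.
have [c0 [left right]] := Eu_asymptote; have /andP[u0 u1] := u01.
exists (fun z => (1 - u) * z + (c0 - (1 - u) * G u)); first exact: convex_affine.
move=> z; have [zG|Gz] := leP z (G u).
  have : (1 - u) * (z - G u) <= 0 by rewrite mulr_ge0_le0 //; lra.
  by have := left z zG; lra.
rewrite right; last exact: ltW.
have : 0 <= \int[nu]_x call_payoff z x.
  by apply: Rintegral_ge0 => x _; exact: call_payoff_ge0.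
lra.
Qed.

Lemma Eu_contact : [set z | G u <= z /\ conv_minorant E z = E z] !=set0.
Proof.
have [c0 [left right]] := Eu_asymptote; have /andP[u0 u1] := u01.
pose g k := E k - ((1 - u) * k + (c0 - (1 - u) * G u)).
have gR K : G u <= K -> g K = \int[nu]_x call_payoff K x.
  by move=> GK; rewrite /g right //; ring.
have [z Gz [s hs]] : exists2 z, G u <= z & exists s, forall k, g z + s * (k - z) <= g k.
  apply: supporting_line_right (1 - u) _ _ _ _ _.
  - exact: continuous_subr_affine Eu_continuous.
  - lra.
  - by move=> k kG; have := left k kG; rewrite /g; lra.
  - by move=> K GK; rewrite gR // Rintegral_ge0 // => x _; exact: call_payoff_ge0.
  - move=> eta eta0; have [K GK CK] := call_integral_vanishing nu_moment (G u) eta0.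
    by exists K; rewrite ?gR.
exists z; split => //.
apply: (conv_minorant_contact Eu_minorized (s := s + (1 - u))) => k.
by have := hs k; rewrite /g; lra.
Qed.

End Eu.

Theorem lemma4p3 (R : realType) (mu nu : probability R R) (G : R -> R) :
  finite_first_moment mu -> finite_first_moment nu ->
  cx_le mu nu ->
  is_interval [set k : R | 0 < Pput nu k - Pput mu k] ->
  is_quantile mu G ->
  forall u : R, 0 < u < 1 ->
    has_left_deriv (conv_minorant (Eu mu nu G u)) (G u) (phifun mu nu G u) /\
    has_left_deriv (conv_minorant (Eu mu nu G u)) (Sfun mu nu G u)
                   (phifun mu nu G u).
Proof.
move=> mu_moment nu_moment mu_cx_nu _ G_quantile u u01.
have minorized := Eu_minorized mu_moment nu_moment mu_cx_nu G_quantile u01.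
have cont := Eu_continuous mu_moment nu_moment G_quantile u01.
have contact := Eu_contact mu_moment nu_moment mu_cx_nu G_quantile u01.
exact: conv_minorant_left_deriv_contact minorized cont _ contact.
Qed.
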